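(* Let $S$ be a semigroup with an ideal $I$, and let $\alpha_1,\dots,\alpha_n$ be congruences of $S$ with $\alpha_j\le\rho_I$ for all $j$. Then $[\alpha_1,\dots,\alpha_n]_S$ is the congruence of $S$ generated by $[\alpha_1|_I,\dots,\alpha_n|_I]_I$ (the commutator computed in the semigroup $I$ of the restricted congruences $\alpha_j|_I=\alpha_j\cap(I\times I)$).
   Context: For an ideal $I$ of $S$, the Rees congruence is $\rho_I=(I\times I)\cup\{(s,s):s\in S\}$. For an algebra $\mathbf A$ and congruences $\alpha_1,\dots,\alpha_n$, $M_{\mathbf A}(\alpha_1,\dots,\alpha_n)$ is the subalgebra of $\mathbf A^{\{0,1\}^n}$ generated by all $g$ such that for some $i$ and $(a,b)\in\alpha_i$, $g(x)=a$ if $x_i=0$ and $g(x)=b$ if $x_i=1$; the commutator $[\alpha_1,\dots,\alpha_n]_{\mathbf A}$ is the smallest congruence $\delta$ of $\mathbf A$ such that for all $f\in M_{\mathbf A}(\alpha_1,\dots,\alpha_n)$: if $(f(x0),f(x1))\in\delta$ for all $x\in\{0,1\}^{n-1}\setminus\{(1,\dots,1)\}$, then $(f(1,\dots,1,0),f(1,\dots,1,1))\in\delta$. *)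

From mathcomp Require Import all_boot.
Set Implicit Arguments. Unset Strict Implicit. Unset Printing Implicit Defensive.

Definition relP (T : Type) := T -> T -> Prop.

Definition rle (T : Type) (R1 R2 : relP T) : Prop :=
  forall a b, R1 a b -> R2 a b.

Definition is_cong (T : Type) (op : T -> T -> T) (R : relP T) : Prop :=
  [/\ (forall a, R a a),
      (forall a b, R a b -> R b a),
      (forall a b c, R a b -> R b c -> R a c)
    & (forall a b c d, R a b -> R c d -> R (op a c) (op b d))].

Definition cong_gen (T : Type) (op : T -> T -> T) (R : relP T) : relP T :=
  fun a b => forall D, is_cong op D -> rle R D -> D a b.

Definition rees (T : Type) (I : T -> Prop) : relP T :=
  fun a b => (I a /\ I b) \/ a = b.

(* M_A(alpha_0,...,alpha_n) : subalgebra of A^{ {0,1}^(n+1) } generated by the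
   generators g(x) = if x_i = 1 then b else a, (a,b) in alpha_i. *)
Inductive inM (T : Type) (op : T -> T -> T) (n : nat) (al : 'I_n.+1 -> relP T)
  : (('I_n.+1 -> bool) -> T) -> Prop :=
| inM_gen (i : 'I_n.+1) (a b : T) : al i a b -> inM op al (fun x => if x i then b else a)
| inM_op f g : inM op al f -> inM op al g -> inM op al (fun x => op (f x) (g x)).

(* the point (x, b) of {0,1}^(n+1), b placed in the last coordinate *)
Definition cube_ext (n : nat) (x : 'I_n -> bool) (b : bool) : 'I_n.+1 -> bool :=
  fun i => match unlift ord_max i with Some j => x j | None => b end.

Definition term_cond (T : Type) (op : T -> T -> T) (n : nat) (al : 'I_n.+1 -> relP T)
  (D : relP T) : Prop :=
  forall f, inM op al f ->
    (forall x : 'I_n -> bool, (exists j, x j = false) ->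
        D (f (cube_ext x false)) (f (cube_ext x true))) ->
    D (f (cube_ext (fun _ => true) false)) (f (cube_ext (fun _ => true) true)).

Definition commutator (T : Type) (op : T -> T -> T) (n : nat) (al : 'I_n.+1 -> relP T)
  : relP T :=
  fun a b => forall D, is_cong op D -> term_cond op al D -> D a b.

Definition ideal_op (T : Type) (op : T -> T -> T) (I : T -> Prop)
  (hIl : forall s t, I t -> I (op s t)) : sig I -> sig I -> sig I :=
  fun x y => exist I (op (proj1_sig x) (proj1_sig y)) (hIl _ _ (proj2_sig y)).

Definition restrict (T : Type) (I : T -> Prop) (R : relP T) : relP (sig I) :=
  fun x y => R (proj1_sig x) (proj1_sig y).

Definition lift_rel (T : Type) (I : T -> Prop) (R : relP (sig I)) : relP T :=
  fun a b => exists x y : sig I, [/\ proj1_sig x = a, proj1_sig y = b & R x y].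

From mathcomp Require Import all_boot.
From Stdlib Require Import FunctionalExtensionality ProofIrrelevance.

(* Lifting the commutator of I into S gives one inclusion, since the inclusion
   I -> S is a homomorphism mapping alpha_j|_I into alpha_j.  For the other one,
   the commutator K of I is invariant under multiplication by elements of S
   (translates of members of M_I stay in M_I), so K together with the diagonal
   of S is a congruence of S.  It satisfies the term condition for the alpha_j:
   as alpha_j <= rho_I, every member of M_S is either constant or takes all its
   values in I, and then it is a member of M_I. *)

Section Commutator.
Local Set Implicit Arguments.
Variables (T : Type) (o : T -> T -> T) (m : nat) (be : 'I_m.+1 -> relP T).

Lemma commutator_cong : is_cong o (commutator o be).
Proof.
split=> [a D [refl _ _ _] _ | a b ab D HD HT | a b c ab bc D HD HT
        | a b c d ab cd D HD HT]; first exact: refl.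
- by case: (HD) => _ sym _ _; apply: sym; apply: ab.
- by case: (HD) => _ _ trans _; apply: trans (ab D HD HT) (bc D HD HT).
- by case: (HD) => _ _ _ comp; apply: comp (ab D HD HT) (cd D HD HT).
Qed.

Lemma commutator_term_cond : term_cond o be (commutator o be).
Proof. by move=> f Mf Hf D HD HT; apply: (HT f Mf) => x hx; apply: Hf. Qed.

Lemma inM_lmap (h : T -> T) F :
  (forall x y, h (o x y) = o (h x) y) ->
  (forall i a b, be i a b -> be i (h a) (h b)) ->
  inM o be F -> inM o be (fun x => h (F x)).
Proof.
move=> hM hbe; elim=> [i a b ab | f g _ Mhf Mg _].
- rewrite (functional_extensionality _ _ (fun x => fun_if h (x i) b a)).
  exact/inM_gen/hbe.
- rewrite (functional_extensionality _ _ (fun x => hM (f x) (g x))).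
  exact: inM_op.
Qed.

Lemma inM_rmap (h : T -> T) F :
  (forall x y, h (o x y) = o x (h y)) ->
  (forall i a b, be i a b -> be i (h a) (h b)) ->
  inM o be F -> inM o be (fun x => h (F x)).
Proof.
move=> hM hbe; elim=> [i a b ab | f g Mf _ _ Mhg].
- rewrite (functional_extensionality _ _ (fun x => fun_if h (x i) b a)).
  exact/inM_gen/hbe.
- rewrite (functional_extensionality _ _ (fun x => hM (f x) (g x))).
  exact: inM_op.
Qed.

End Commutator.

Section CommutatorMorph.
Local Set Implicit Arguments.
Variables (T U : Type) (o : T -> T -> T) (o' : U -> U -> U) (m : nat).
Variables (be : 'I_m.+1 -> relP T) (ga : 'I_m.+1 -> relP U) (h : T -> U).
Hypotheses (h_morph : forall x y, h (o x y) = o' (h x) (h y))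
           (h_rel : forall i a b, be i a b -> ga i (h a) (h b)).

Lemma inM_morph F : inM o be F -> inM o' ga (fun x => h (F x)).
Proof.
elim=> [i a b ab | f g _ Mhf _ Mhg].
- rewrite (functional_extensionality _ _ (fun x => fun_if h (x i) b a)).
  exact/inM_gen/h_rel.
- rewrite (functional_extensionality _ _ (fun x => h_morph (f x) (g x))).
  exact: inM_op.
Qed.

Lemma commutator_morph a b :
  commutator o be a b -> commutator o' ga (h a) (h b).
Proof.
move=> Cab; apply: (Cab (fun x y => commutator o' ga (h x) (h y))).
- have [refl sym trans comp] := commutator_cong o' ga.
  split=> [x | x y | x y z | x y z w]; rewrite ?h_morph; eauto.
- by move=> f /inM_morph Mhf; apply: commutator_term_cond Mhf.
Qed.

End CommutatorMorph.

Section Ideal.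
Local Set Implicit Arguments.
Variables (S : Type) (op : S -> S -> S) (I : S -> Prop).
Hypotheses (op_assoc : associative op)
           (hIl : forall s t, I t -> I (op s t)) (hIr : forall s t, I s -> I (op s t)).

Local Notation opI := (ideal_op hIl).

Lemma ideal_val_inj (x y : sig I) : proj1_sig x = proj1_sig y -> x = y.
Proof. by apply: eq_sig_hprop => a; apply: proof_irrelevance. Qed.

Definition ideal_lmul (s : S) (c : sig I) : sig I :=
  exist I (op s (proj1_sig c)) (hIl s (proj2_sig c)).
Definition ideal_rmul (t : S) (c : sig I) : sig I :=
  exist I (op (proj1_sig c) t) (hIr t (proj2_sig c)).

(* Translations by the monoid S^1, encoded as [option S] with [None] the
   adjoined identity. *)
Definition ideal_lmul1 (s : option S) c := if s is Some s then ideal_lmul s c else c.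
Definition ideal_rmul1 (t : option S) c := if t is Some t then ideal_rmul t c else c.

Lemma ideal_lmulA s x y : ideal_lmul s (opI x y) = opI (ideal_lmul s x) y.
Proof. by apply: ideal_val_inj; rewrite /= op_assoc. Qed.

Lemma ideal_rmulA t x y : ideal_rmul t (opI x y) = opI x (ideal_rmul t y).
Proof. by apply: ideal_val_inj; rewrite /= op_assoc. Qed.

Definition rees_ext (D : relP (sig I)) : relP S := fun a b => lift_rel D a b \/ a = b.

Lemma rees_ext_cong (D : relP (sig I)) :
  is_cong opI D ->
  (forall s x y, D x y -> D (ideal_lmul s x) (ideal_lmul s y)) ->
  (forall t x y, D x y -> D (ideal_rmul t x) (ideal_rmul t y)) ->
  is_cong op (rees_ext D).
Proof.
move=> [refl sym trans comp] Dl Dr.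
split=> [a | a b | a b c | a b c d]; first by right.
- case=> [[x [y [<- <- xy]]] | ->]; last by right.
  by left; exists y, x; split=> //; apply: sym.
- case=> [[x [y [<- <- xy]]] | ->] // [[y' [z [ey' <- yz]]] | <-]; last by left; exists x, y.
  have Ey : y' = y by apply: ideal_val_inj.
  subst y'.
  by left; exists x, z; split=> //; apply: trans xy yz.
- case=> [[x [y [<- <- xy]]] | <-] [[z [w [<- <- zw]]] | <-]; last by right.
  + by left; exists (opI x z), (opI y w); split=> //; apply: comp.
  + by left; exists (ideal_rmul c x), (ideal_rmul c y); split=> //; apply: Dr.
  + by left; exists (ideal_lmul a z), (ideal_lmul a w); split=> //; apply: Dl.
Qed.

Variables (n : nat) (al : 'I_n.+1 -> relP S).
Hypotheses (al_cong : forall j, is_cong op (al j)) (al_rees : forall j, rle (al j) (rees I)).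

Local Notation alI := (fun j => @restrict S I (al j)).
Local Notation K := (commutator opI alI).

Lemma inM_ideal_lmul s F : inM opI alI F -> inM opI alI (fun x => ideal_lmul s (F x)).
Proof.
apply: inM_lmap; first exact: ideal_lmulA.
by move=> i a b ab; have [refl _ _ comp] := al_cong i; apply: comp (refl s) ab.
Qed.

Lemma inM_ideal_rmul t F : inM opI alI F -> inM opI alI (fun x => ideal_rmul t (F x)).
Proof.
apply: inM_rmap; first exact: ideal_rmulA.
by move=> i a b ab; have [refl _ _ comp] := al_cong i; apply: comp ab (refl t).
Qed.

Definition translate_inv (c d : sig I) : Prop :=
  forall s t, K (ideal_lmul1 s (ideal_rmul1 t c)) (ideal_lmul1 s (ideal_rmul1 t d)).

Lemma translate_inv_cong : is_cong opI translate_inv.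
Proof.
have [refl sym trans comp] := commutator_cong opI alI.
split=> [c s t | c d cd s t | c d e cd de s t | c d e f cd ef s t]; eauto.
have assoc_right : forall x, ideal_lmul1 s (ideal_rmul1 t (opI x e))
                     = ideal_lmul1 s (ideal_rmul1 (Some (proj1_sig (ideal_rmul1 t e))) x).
  by move=> x; apply: ideal_val_inj; case: (s) (t) => [s'|] [t'|] /=; rewrite ?op_assoc.
have assoc_left : forall y, ideal_lmul1 s (ideal_rmul1 t (opI d y))
                     = ideal_lmul1 (Some (proj1_sig (ideal_lmul1 s d))) (ideal_rmul1 t y).
  by move=> y; apply: ideal_val_inj; case: (s) (t) => [s'|] [t'|] /=; rewrite ?op_assoc.
apply: (trans _ (ideal_lmul1 s (ideal_rmul1 t (opI d e)))).
- by rewrite !assoc_right; apply: cd.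
- by rewrite !assoc_left; apply: ef.
Qed.

Lemma translate_inv_term_cond : term_cond opI alI translate_inv.
Proof.
move=> f Mf Hf s t.
have Mft : inM opI alI (fun x => ideal_rmul1 t (f x)).
  by case: t => [t|] //; apply: inM_ideal_rmul.
have Msft : inM opI alI (fun x => ideal_lmul1 s (ideal_rmul1 t (f x))).
  by case: s => [s|] //; apply: inM_ideal_lmul.
exact: commutator_term_cond Msft (fun x hx => Hf x hx s t).
Qed.

Lemma commutator_translate_inv c d : K c d -> translate_inv c d.
Proof. by apply; [apply: translate_inv_cong | apply: translate_inv_term_cond]. Qed.

Lemma rees_ext_commutator_cong : is_cong op (rees_ext K).
Proof.
apply: rees_ext_cong; first exact: commutator_cong.
- by move=> s x y /commutator_translate_inv /(_ (Some s) None).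
- by move=> t x y /commutator_translate_inv /(_ None (Some t)).
Qed.

Lemma inM_const_or_ideal F : inM op al F ->
  (exists c, forall x, F x = c) \/
  (exists2 G, inM opI alI G & forall x, proj1_sig (G x) = F x).
Proof.
elim=> [i a b ab | f g _ [[c Ef] | [f' Mf' Ef]] _ [[d Eg] | [g' Mg' Eg]]].
- case: (al_rees ab) => [[Ia Ib] | E]; last by left; exists a => x; case: (x i).
  right; exists (fun x => if x i then exist I b Ib else exist I a Ia).
    exact: inM_gen.
  by move=> x; case: (x i).
- by left; exists (op c d) => x; rewrite Ef Eg.
- right; exists (fun x => ideal_lmul c (g' x)); first exact: inM_ideal_lmul.
  by move=> x /=; rewrite Ef Eg.
- right; exists (fun x => ideal_rmul d (f' x)); first exact: inM_ideal_rmul.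
  by move=> x /=; rewrite Eg Ef.
- right; exists (fun x => opI (f' x) (g' x)); first exact: inM_op.
  by move=> x /=; rewrite Ef Eg.
Qed.

Lemma rees_ext_commutator_term_cond : term_cond op al (rees_ext K).
Proof.
move=> f /inM_const_or_ideal [[c Ef] | [G MG EG]] Hf; first by right; rewrite !Ef.
left; exists (G (cube_ext (fun _ => true) false)), (G (cube_ext (fun _ => true) true)).
split=> //; apply: commutator_term_cond MG _ => x /Hf.
have [refl _ _ _] := commutator_cong opI alI.
case=> [[u [v [Eu Ev uv]]] | E].
- have -> : G (cube_ext x false) = u by apply: ideal_val_inj; rewrite EG Eu.
  by have -> : G (cube_ext x true) = v by apply: ideal_val_inj; rewrite EG Ev.
- by have -> : G (cube_ext x false) = G (cube_ext x true) by apply: ideal_val_inj; rewrite !EG.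
Qed.

End Ideal.

Theorem lemma2p2 (S : Type) (op : S -> S -> S) (hassoc : associative op)
  (I : S -> Prop) (hI0 : exists x, I x)
  (hIl : forall s t, I t -> I (op s t)) (hIr : forall s t, I s -> I (op s t))
  (n : nat) (al : 'I_n.+1 -> relP S)
  (hcong : forall j, is_cong op (al j))
  (hle : forall j, rle (al j) (rees I)) :
  forall a b,
    commutator op al a b <->
    cong_gen op (lift_rel (commutator (ideal_op hIl) (fun j => @restrict S I (al j)))) a b.
Proof.
move=> a b; split.
- move=> Cab D HD Dsub.
  have [/Dsub // | <-] := Cab _ (rees_ext_commutator_cong I hassoc hIl hIr al hcong)
                          (rees_ext_commutator_term_cond (hIl := hIl) hassoc hIr hcong hle).
  by case: HD.
- apply; first exact: commutator_cong.
  move=> _ _ [x [y [<- <- Kxy]]].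
  exact: (commutator_morph (@proj1_sig S I) (fun _ _ => erefl) (fun _ _ _ r => r)) Kxy.
Qed.
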